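(* Let $(X_n)_{n\ge1}$ be a sequence of finite sets with $X_1=\emptyset$ and $|X_p|=p$ for every prime $p$, and for each $n\ge1$ let the cyclic group $\mathbb{Z}_n$ act on $X_n$ in such a way that $|X_n^i|=|X_{\gcd(s_n,i)}|$ for all $n,i\ge1$ (where $i$ acts through its residue modulo $n$). Then for every $n\ge1$ the triple $(X_n,\mathbb{Z}_n,S_n(q))$ exhibits the cyclic sieving phenomenon. The same holds with $s_n$ replaced by $g_n$ and $S_n(q)$ replaced by $G_n(q)$.
   Context: $\Phi_k(q)$ is the $k$-th cyclotomic polynomial. Set $s_1=g_1=0$, and for $n>1$ let $s_n$ be the smallest prime factor of $n$ and $g_n$ the greatest prime factor of $n$. Define $S_1(q)=G_1(q)=\Phi_1(q)=q-1$ and, for $n>1$, $S_n(q)=\Phi_{s_n}(q^{n/s_n})$, $G_n(q)=\Phi_{g_n}(q^{n/g_n})$. $X_n^i$ denotes the set of points of $X_n$ fixed by $i\in\mathbb{Z}_n$ (the additive group of integers modulo $n$). A triple $(X,\mathbb{Z}_n,f(q))$ with $f(q)\in\mathbb{Z}[q]$ exhibits the cyclic sieving phenomenon if $|X^i|=f(\omega_n^i)$ for all $i\in\mathbb{Z}_n$, where $\omega_n$ is a primitive $n$-th root of unity. *)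

From mathcomp Require Import all_boot all_order all_algebra all_field.
Set Implicit Arguments. Unset Strict Implicit. Unset Printing Implicit Defensive.
Import GRing.Theory Num.Theory.
Local Open Scope ring_scope.

Definition s_ (n : nat) : nat := if (n <= 1)%N then 0%N else pdiv n.
Definition g_ (n : nat) : nat := if (n <= 1)%N then 0%N else max_pdiv n.

Definition S_poly (n : nat) : {poly int} :=
  if (n <= 1)%N then 'X - 1 else ('Phi_(s_ n)) \Po 'X^(n %/ s_ n).
Definition G_poly (n : nat) : {poly int} :=
  if (n <= 1)%N then 'X - 1 else ('Phi_(g_ n)) \Po 'X^(n %/ g_ n).

(* An action of the cyclic group Z_n on a finite set T, given by the
   action of the integers i (acting through their residue mod n). *)
Definition Zn_action (n : nat) (T : finType) (a : nat -> T -> T) : Prop :=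
  [/\ forall x, a 0%N x = x,
      forall i j x, a (i + j)%N x = a i (a j x)
    & forall x, a n x = x].

Definition fixpts (T : finType) (a : nat -> T -> T) (i : nat) : {set T} :=
  [set x | a i x == x].

Definition CSP (n : nat) (T : finType) (a : nat -> T -> T) (f : {poly int}) :
  Prop :=
  forall (w : algC), n.-primitive_root w ->
    forall i : nat, (i < n)%N ->
      (#|fixpts a i|%:R : algC) = (map_poly intr f).[w ^+ i].

From mathcomp Require Import all_boot all_order all_algebra all_field.

Set Implicit Arguments.

Import GRing.Theory Num.Theory.
Local Open Scope ring_scope.

(* For a prime p dividing n, 'Phi_p(q^(n/p)) = 1 + q^(n/p) + ... + q^((p-1)n/p)
   takes at w^i the value p when w^(i n/p) = 1, i.e. when p | i, and 0
   otherwise (a full sum of p-th roots of unity).  This is exactly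
   |X_(gcd(p,i))|, since X_p has p points and X_1 none. *)

Lemma Cyclotomic1 : 'Phi_1 = 'X - 1.
Proof. by have := prod_Cyclotomic (ltn0Sn 0); rewrite big_seq1 expr1. Qed.

Lemma divisors_prime p : prime p -> divisors p = [:: 1%N; p].
Proof.
move=> p_pr; apply: (irr_sorted_eq ltn_trans ltnn (sorted_divisors_ltn p)).
  by rewrite /= andbT prime_gt1.
move=> d; rewrite -dvdn_divisors ?prime_gt0 // !inE.
apply/idP/idP; first by case/primeP: p_pr => _ dvdP /dvdP.
by case/orP=> /eqP ->.
Qed.

Lemma Cyclotomic_prime p : prime p -> 'Phi_p = \sum_(k < p) 'X^k.
Proof.
move=> p_pr; apply: (@mulfI _ ('X - 1)); first by rewrite -polyC1 polyXsubC_eq0.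
rewrite -subrX1 -Cyclotomic1 -prod_Cyclotomic ?prime_gt0 //.
by rewrite divisors_prime // big_cons big_seq1.
Qed.

Lemma sum_expr_unity_root (R : idomainType) p (y : R) :
  p.-unity_root y -> \sum_(k < p) y ^+ k = if y == 1 then p%:R else 0.
Proof.
move=> /unity_rootP yp1; have [->|y_neq1] := eqVneq.
  by under eq_bigr do rewrite expr1n; rewrite sumr_const card_ord.
apply: (@mulfI _ (y - 1)); first by rewrite subr_eq0.
by rewrite -subrX1 yp1 subrr mulr0.
Qed.

Lemma horner_Cyclotomic_prime_comp (R : idomainType) n p (w : R) i :
    prime p -> (p %| n)%N -> n.-primitive_root w ->
  (map_poly intr ('Phi_p \Po 'X^(n %/ p))).[w ^+ i]
    = (if (p %| i)%N then p else 0%N)%:R.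
Proof.
move=> p_pr p_dv_n w_prim; set y := (w ^+ i) ^+ (n %/ p).
have np_gt0 : (0 < n %/ p)%N.
  by rewrite divn_gt0 ?prime_gt0 // dvdn_leq // (prim_order_gt0 w_prim).
have y_root : p.-unity_root y.
  by apply/unity_rootP; rewrite /y -!exprM -mulnA divnK // mulnC exprM
    (prim_expr_order w_prim) expr1n.
have y_eq1 : (y == 1) = (p %| i)%N.
  by rewrite /y -exprM -(prim_order_dvd w_prim) -{1}(divnK p_dv_n) mulnC
    dvdn_pmul2r.
rewrite Cyclotomic_prime // map_comp_poly horner_comp map_polyXn hornerXn.
rewrite rmorph_sum horner_sum (eq_bigr (fun k : 'I_p => y ^+ k)); last first.
  by move=> k _; rewrite rmorphXn /= map_polyX hornerXn.
by rewrite sum_expr_unity_root // y_eq1; case: (p %| i)%N.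
Qed.

Lemma CSP_Cyclotomic_prime_comp p n (T : finType) (a : nat -> T -> T) :
    prime p -> (p %| n)%N -> Zn_action n a ->
    (forall i, (0 < i)%N -> #|fixpts a i| = if (p %| i)%N then p else 0%N) ->
  CSP n a ('Phi_p \Po 'X^(n %/ p)).
Proof.
move=> p_pr p_dv_n [a0 _ an] card_fix w w_prim i _.
rewrite horner_Cyclotomic_prime_comp //.
have [->|i_gt0] := posnP i; last by rewrite card_fix.
have -> : fixpts a 0 = fixpts a n by apply/setP => x; rewrite !inE a0 an eqxx.
by rewrite dvdn0 card_fix ?p_dv_n // (prim_order_gt0 w_prim).
Qed.

Lemma CSP_empty (T : finType) (a : nat -> T -> T) :
  #|T| = 0%N -> CSP 1 a ('X - 1).
Proof.
move=> T_empty w _ [|//] _.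
rewrite expr0 rmorphB /= map_polyX rmorph1 !hornerE subrr.
by apply/eqP; rewrite pnatr_eq0 -leqn0 -T_empty max_card.
Qed.

Section PrimeDivisorSieve.

Variables (X : nat -> finType) (act : forall n : nat, nat -> X n -> X n).
Hypothesis act_Zn : forall n : nat, (0 < n)%N -> Zn_action n (act n).
Hypothesis X1_empty : #|X 1%N| = 0%N.
Hypothesis card_X_prime : forall p : nat, prime p -> #|X p| = p.

Lemma card_X_gcdn_prime p i :
  prime p -> #|X (gcdn p i)| = if (p %| i)%N then p else 0%N.
Proof.
move=> p_pr; case: ifP => [/gcdn_idPl -> | p_ndv_i]; first exact: card_X_prime.
by have /eqP -> : coprime p i by rewrite prime_coprime // p_ndv_i.
Qed.

Lemma CSP_prime_divisor_sieve (r : nat -> nat) :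
    (forall n, (1 < n)%N -> prime (r n) && (r n %| n)%N) ->
    (forall n i, (1 < n)%N -> (0 < i)%N ->
       #|fixpts (act n) i| = #|X (gcdn (r n) i)|) ->
  forall n, (0 < n)%N ->
    CSP n (act n) (if (n <= 1)%N then 'X - 1 else 'Phi_(r n) \Po 'X^(n %/ r n)).
Proof.
move=> r_prime_dvd card_fix n n_gt0; case: leqP => [n_le1 | n_gt1].
  have -> : n = 1%N by apply/anti_leq; rewrite n_le1.
  exact: CSP_empty.
have /andP[r_pr r_dv_n] := r_prime_dvd n n_gt1.
apply: (CSP_Cyclotomic_prime_comp _ r_pr r_dv_n (act_Zn _ n_gt0)) => i i_gt0.
by rewrite card_fix // card_X_gcdn_prime.
Qed.

End PrimeDivisorSieve.

Theorem corollary3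
  (X : nat -> finType) (act : forall n : nat, nat -> X n -> X n)
  (Hact : forall n : nat, (0 < n)%N -> Zn_action n (act n))
  (HX1 : #|X 1%N| = 0%N)
  (HXp : forall p : nat, prime p -> #|X p| = p) :
  ((forall n i : nat, (1 < n)%N -> (0 < i)%N ->
      #|fixpts (act n) i| = #|X (gcdn (s_ n) i)|) ->
   forall n : nat, (0 < n)%N -> CSP n (act n) (S_poly n))
  /\
  ((forall n i : nat, (1 < n)%N -> (0 < i)%N ->
      #|fixpts (act n) i| = #|X (gcdn (g_ n) i)|) ->
   forall n : nat, (0 < n)%N -> CSP n (act n) (G_poly n)).
Proof.
split; apply: CSP_prime_divisor_sieve => // n n_gt1.
  by rewrite /s_ leqNgt n_gt1 /= pdiv_prime ?pdiv_dvd.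
by rewrite /g_ leqNgt n_gt1 /= max_pdiv_prime ?max_pdiv_dvd.
Qed.
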